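(* Let $\sigma=(1\,2\,\cdots\,n)\in S_n$. Let $\mathcal{C}$ be a chain of the Greene–Kleitman symmetric chain decomposition of $B_n$ and let $X\in\mathcal{C}$ with $|X|\le\lfloor n/2\rfloor$. Then $(\sigma(X))^*=\sigma(X^* )$. Consequently $(\sigma^j(X))^*=\sigma^j(X^* )$ for all integers $j$, and hence $(\rho(X))^*=\rho(X^* )$ for all $\rho\in\langle\sigma\rangle$.
   Context: Greene–Kleitman SCD of $B_n$: for $A\subseteq[n]$, process $k=1,2,\dots,n$ in order; if $k\in A$ and there is some $j<k$ with $j\notin A$ and $j$ not yet paired, let $p_A(k)$ be the largest such $j$, and say $p_A(k)$ and $k$ are paired. Let $R(A)$ be the set of $k$ for which $p_A(k)$ is defined, $L(A)=\{p_A(k):k\in R(A)\}$, and write $[n]\setminus(R(A)\cup L(A))=\{a_1<a_2<\dots<a_s\}$. The chain of $A$ is $\mathcal{C}(A)=\{X\subseteq[n]: R(X)=R(A)\}$, which equals $R(A)\subset R(A)\cup\{a_1\}\subset R(A)\cup\{a_1,a_2\}\subset\dots\subset R(A)\cup\{a_1,\dots,a_s\}=[n]\setminus L(A)$. The distinct sets $\mathcal{C}(A)$, $A\in B_n$, form a partition of $B_n$ into symmetric chains (the Greene–Kleitman SCD). For a chain $\mathcal{C}$ of this decomposition and $X\in\mathcal{C}$ with $|X|\le\lfloor n/2\rfloor$, $X^*$ denotes the unique member of $\mathcal{C}$ with $|X^*|=n-|X|$. In $(\sigma(X))^*$, the star is taken in the chain containing $\sigma(X)$. *)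

(* Elements of [n] = {1,...,n} are represented by 'I_n,
   with k : 'I_n standing for k+1. *)
From mathcomp Require Import all_boot all_order all_fingroup.
Set Implicit Arguments. Unset Strict Implicit. Unset Printing Implicit Defensive.

Section GK.
Variable n : nat.

(* One step of the Greene–Kleitman scan: state = (stack of unpaired
   non-members, in decreasing order on top; list of pairs (p_A(k), k)). *)
Definition gk_step (A : {set 'I_n}) (st : seq 'I_n * seq ('I_n * 'I_n)) (k : 'I_n) :=
  let: (stk, prs) := st in
  if k \in A then
    match stk with
    | j :: stk' => (stk', (j, k) :: prs)   (* j = largest unpaired j<k, j \notin A *)
    | [::] => (stk, prs)
    end
  else (k :: stk, prs).

Definition gk_pairs (A : {set 'I_n}) : seq ('I_n * 'I_n) :=
  (foldl (gk_step A) ([::], [::]) (enum 'I_n)).2.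

Definition gkR (A : {set 'I_n}) : {set 'I_n} := [set x | x \in map snd (gk_pairs A)].
Definition gkL (A : {set 'I_n}) : {set 'I_n} := [set x | x \in map fst (gk_pairs A)].

Definition gk_chain (A : {set 'I_n}) : {set {set 'I_n}} := [set X | gkR X == gkR A].

(* X^* : the member of the chain of X of size n - |X|
   (it exists and is unique when |X| <= n/2, the default is never used then) *)
Definition gk_star (X : {set 'I_n}) : {set 'I_n} :=
  odflt X [pick Y in gk_chain X | #|Y| == n - #|X|].

Definition sigma : {perm 'I_n} := perm (@ordS_inj n).

End GK.

(* A set A of [n] (positions 0..n-1) is read as a lattice walk: step m goes
   down if m is in A and up otherwise; [height f b] is the position after b
   steps and [min_height f b] the lowest position reached so far.

   1. Scanning. The stack of the Greene–Kleitman scan has size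
      height - min_height at every time, so k is in R(A) iff k is in A and
      step k does not reach a new minimum of the walk ([gkR_paired]).
   2. Uniqueness. Two sets with the same R and the same size coincide: at a
      first disagreement the walk of the set that takes the step down ends
      strictly lower ([chain_card_inj]).
   3. The star. For |X| <= n/2 the walk ends at height n - 2|X| >= 0. The
      "last visits" of the levels min_height, ..., min_height + height n - 1
      are positions outside X; adding them to X keeps R and yields size n-|X|,
      so X^* = X ∪ U(X) ([star_union]).
   4. Rotation. p is such a last visit iff the walk read cyclically from p
      stays strictly above its start during a full turn ([last_visit_cyc_record]);
      this is invariant under cyclic shifts, so U(sigma X) = sigma U(X)
      ([last_visit_set_rotate]) and (sigma X)^* = sigma X^*. *)
From mathcomp Require Import all_boot all_order all_fingroup ssralg ssrnum ssrint zify.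
Set Implicit Arguments. Unset Strict Implicit. Unset Printing Implicit Defensive.
Import Order.TTheory GRing.Theory.

Section Walk.
Variable f : nat -> bool.

Fixpoint height (b : nat) : int :=
  if b is b'.+1 then (height b' + (if f b' then -1 else 1))%R else 0%R.

Lemma heightS i : height i.+1 = (height i + (if f i then -1 else 1))%R.
Proof. by []. Qed.

Fixpoint min_height (b : nat) : int :=
  if b is b'.+1 then Num.min (min_height b') (height b) else 0%R.

Lemma min_heightS b : min_height b.+1 = Num.min (min_height b) (height b.+1).
Proof. by []. Qed.

Lemma min_height_le b m : m <= b -> (min_height b <= height m)%R.
Proof.
elim: b => [|b IH]; first by rewrite leqn0 => /eqP ->.
rewrite min_heightS leq_eqVlt ltnS => /orP [/eqP ->|/IH]; lia.
Qed.

Lemma min_height_attained b : exists2 m, m <= b & min_height b = height m.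
Proof.
elim: b => [|b [m mb Em]]; first by exists 0.
rewrite min_heightS; case: (leP (min_height b) (height b.+1)) => _.
  by exists m => //; apply: leqW.
by exists b.+1.
Qed.

Definition paired k := f k && (min_height k < height k)%R.

Lemma pairedP k :
  reflect (f k /\ exists2 j, j <= k & (height j < height k)%R) (paired k).
Proof.
apply: (iffP andP) => [[fk lt]|[fk [j jk lt]]]; split => //.
  by have [j jk E] := min_height_attained k; exists j; rewrite -?E.
by have := min_height_le jk; lia.
Qed.

End Walk.

(* Membership in A of m mod n: the walk of A, repeated periodically. *)
Definition memcyc n (A : {set 'I_n}) (m : nat) : bool :=
  [exists x in A, val x == m %% n].

Lemma memcycE n (A : {set 'I_n}) (x : 'I_n) : memcyc A x = (x \in A).
Proof.
rewrite /memcyc modn_small //.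
by apply/existsP/idP => [[y /andP [yA /eqP/val_inj <-]] //|xA]; exists x; rewrite xA /=.
Qed.

Section Scan.
Variables (n : nat) (A : {set 'I_n}).
Local Notation f := (memcyc A).

Definition scan i := foldl (gk_step A) ([::], [::]) (take i (enum 'I_n)).

Lemma scan_invariant i : i <= n ->
  Posz (size (scan i).1) = (height f i - min_height f i)%R /\
  forall k : 'I_n, (k \in map snd (scan i).2) = (k < i) && paired f k.
Proof.
elim: i => [|i IH] lein; first by rewrite /scan take0.
have [IHsize IHpairs] := IH (ltnW lein).
rewrite /scan (take_nth (Ordinal lein)) ?size_enum_ord // foldl_rcons -/(scan i).
set x := nth _ _ i; have vx : x = i :> nat by exact: nth_enum_ord.
have fx : f i = (x \in A) by rewrite -vx memcycE.
have ltS (k : 'I_n) : (k < i.+1) = (k < i) || (k == x).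
  by rewrite ltnS leq_eqVlt orbC -vx.
have pairedx : paired f i = (x \in A) && (size (scan i).1 > 0).
  by rewrite /paired fx; congr (_ && _); lia.
move: IHsize IHpairs pairedx; case: (scan i) => stk prs /= IHsize IHpairs pairedx.
rewrite /gk_step fx; have hmin := min_height_le f (leqnn i).
case xA: (x \in A); last first.
  split => /=; first lia.
  move=> k; rewrite IHpairs ltS andb_orl; case: eqP => [->|_]; last by rewrite orbF.
  by rewrite vx pairedx xA !andbF.
case: stk IHsize pairedx => [|j stk] /= IHsize pairedx; split; try lia;
  move=> k; rewrite ?in_cons IHpairs ltS andb_orl; case: eqP => [->|_] //=;
  by rewrite ?orbF // vx pairedx xA ltnn.
Qed.

End Scan.

Lemma gkR_paired n (A : {set 'I_n}) (k : 'I_n) : (k \in gkR A) = paired (memcyc A) k.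
Proof.
have [_ H] := scan_invariant A (leqnn n).
by rewrite /scan take_oversize ?size_enum_ord // in H; rewrite inE H ltn_ord.
Qed.

Lemma paired_gkR n (A B : {set 'I_n}) : gkR A = gkR B ->
  forall m, m < n -> paired (memcyc A) m = paired (memcyc B) m.
Proof. by move=> AB m mn; rewrite -[m]/(val (Ordinal mn)) -!gkR_paired AB. Qed.

Lemma height_eq_prefix (f g : nat -> bool) i : (forall m, m < i -> f m = g m) ->
  forall m, m <= i -> height f m = height g m.
Proof. by move=> fg; elim=> [|m IH] // mi; rewrite !heightS IH ?fg // ltnW. Qed.

Lemma height_incr_le (f g : nat -> bool) a b :
  a <= b -> (forall m, a <= m < b -> g m -> f m) ->
  (height f b - height f a <= height g b - height g a)%R.
Proof.
move=> ab gf; elim: b ab gf => [|b IH]; first by rewrite leqn0 => /eqP ->; lia.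
rewrite leq_eqVlt => /orP [/eqP <-|ab] gf; first lia.
have := IH ab (fun m hm => gf m ltac:(lia)); have := gf b ltac:(lia).
by rewrite !heightS; case: (f b); case: (g b) => //=; lia.
Qed.

Lemma height_incr_eq (f g : nat -> bool) a b :
  a <= b -> (forall m, a <= m < b -> f m = g m) ->
  (height f b - height f a = height g b - height g a)%R.
Proof.
move=> ab fg.
have [gf fg'] : (forall m, a <= m < b -> g m -> f m) /\ (forall m, a <= m < b -> f m -> g m).
  by split=> m /fg ->.
by have := height_incr_le ab gf; have := height_incr_le ab fg'; lia.
Qed.

Lemma height_count (f : nat -> bool) b :
  height f b = (b%:Z - 2 * (count f (iota 0 b))%:Z)%R.
Proof.
elim: b => [|b IH] //; rewrite heightS IH -[b.+1]addn1 iotaD count_cat /= addn0.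
by case: (f b); lia.
Qed.

Lemma height_card n (A : {set 'I_n}) : height (memcyc A) n = (n%:Z - 2 * #|A|%:Z)%R.
Proof.
have -> : #|A| = count (mem A) (enum 'I_n) by rewrite -sum1_card sum1_count enumT unlock.
rewrite height_count -val_enum_ord count_map.
by congr (_ - 2 * Posz _)%R; apply: eq_count => x /=; rewrite memcycE.
Qed.

Section FirstDifference.
Variables (f g : nat -> bool) (n i : nat).
Hypothesis same_paired : forall m, m < n -> paired f m = paired g m.
Hypotheses (lt_i_n : i < n) (same_prefix : forall m, m < i -> f m = g m).
Hypotheses (f_i : f i) (g_Ni : ~~ g i).

Local Notation hf := (height f).
Local Notation hg := (height g).

Lemma paired_g_paired_f m : m < n -> paired g m -> f m.
Proof. by move=> mn; rewrite -same_paired // => /andP []. Qed.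

(* g cannot come back to level hg i after step i: at the first return k,
   step k is paired in g, hence in f, which contradicts the fact that f and
   g agree after their last disagreement u <= k, where f reached a minimum. *)
Lemma return_impossible k : i <= k < n -> (hg k.+1 <= hg i)%R ->
  (forall m, i <= m < k -> (hg i < hg m.+1)%R) -> False.
Proof.
move=> /andP [ik kn] back above.
have ki : i < k.
  case: (ltngtP i k) ik => // eik _.
  by move: back; rewrite -eik heightS (negbTE g_Ni); lia.
have above_k : (hg i < hg k)%R by have := above k.-1 ltac:(lia); rewrite prednK //; lia.
have g_k : g k by move: back; rewrite heightS; case: (g k) => //; lia.
have g_paired m : i < m <= k -> g m -> f m.
  move=> hm gm; apply: paired_g_paired_f; first lia.
  apply/pairedP; split => //; exists i; first lia.
  by case: (ltngtP m k) => [mk|//|->] //; have := above m.-1 ltac:(lia); rewrite prednK //; lia.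
have [_ [j jk hj]] : f k /\ exists2 j, j <= k & (hf j < hf k)%R.
  by apply/pairedP; rewrite same_paired //; apply/pairedP; split => //; exists i; lia.
pose P u := [&& i <= u <= k, f u & ~~ g u].
have exP : exists u, P u by exists i; rewrite /P f_i g_Ni leqnn ik.
have ubP v : P v -> v <= k by case/and3P => /andP [].
case: (ex_maxnP exP ubP) => u /and3P [/andP [iu uk] f_u g_Nu] maxu.
have uk' : u < k.
  by case: (ltngtP u k) uk => // euk _; move: g_Nu; rewrite euk g_k.
have agree m : u < m <= k -> f m = g m.
  move=> hm; case g_m: (g m); first by apply: g_paired => //; lia.
  by apply/negP => f_m; have := maxu m; rewrite /P f_m g_m; lia.
have incr m : u.+1 <= m <= k.+1 -> (hf m - hf u.+1 = hg m - hg u.+1)%R.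
  by move=> /andP [a b]; apply: height_incr_eq => // m' hm'; apply: agree; lia.
have u_min v : v <= u -> (hf u <= hf v)%R.
  move=> vu; case: (leP (hf u) (hf v)) => // lt; exfalso.
  have : paired g u by rewrite -same_paired; [apply/pairedP; split => //; exists v|lia].
  by move/andP => [g_u _]; rewrite g_u in g_Nu.
have hfu : hf u.+1 = (hf u - 1)%R by rewrite heightS f_u.
have hfk : hf k.+1 = (hf k - 1)%R by rewrite heightS (agree k ltac:(lia)) g_k.
have hgu := above u ltac:(lia).
have := incr k.+1 ltac:(lia).
case: (leqP j u) => [ju|uj]; first by have := u_min j ju; lia.
have := incr j ltac:(lia); have := above j.-1 ltac:(lia); rewrite prednK; lia.
Qed.

Lemma no_return k : i <= k < n -> (hg i < hg k.+1)%R.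
Proof.
elim/ltn_ind: k => k IH hk; case: (ltP (hg i) (hg k.+1)) => // back; exfalso.
by apply: (return_impossible hk back) => m hm; apply: IH; lia.
Qed.

(* Hence every later down step of g is paired, so also a down step of f. *)
Lemma first_difference_height : (hf n < hg n)%R.
Proof.
have hi := height_eq_prefix same_prefix (leqnn i).
have incl : (hf n - hf i.+1 <= hg n - hg i.+1)%R.
  apply: height_incr_le => // m hm g_m; apply: paired_g_paired_f; first lia.
  apply/pairedP; split => //; exists i; first lia.
  by have := no_return (k := m.-1) ltac:(lia); rewrite prednK //; lia.
by move: incl; rewrite !heightS f_i (negbTE g_Ni); lia.
Qed.

End FirstDifference.

Lemma first_difference_card n (Y Y' : {set 'I_n}) i : gkR Y = gkR Y' -> i < n ->
  (forall m, m < i -> memcyc Y m = memcyc Y' m) -> memcyc Y i -> ~~ memcyc Y' i ->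
  #|Y'| < #|Y|.
Proof.
move=> YY' lin pre Yi Y'i.
have := first_difference_height (paired_gkR YY') lin pre Yi Y'i.
by rewrite !height_card; lia.
Qed.

Lemma chain_card_inj n (Y Y' : {set 'I_n}) : gkR Y = gkR Y' -> #|Y| = #|Y'| -> Y = Y'.
Proof.
move=> YY' card_eq.
pose P i := (i < n) && (memcyc Y i != memcyc Y' i).
case: (boolP [exists x : 'I_n, P x]) => [/existsP [x Px]|noP]; last first.
  apply/setP => x; rewrite -!memcycE.
  case: (boolP (memcyc Y x == memcyc Y' x)) => [/eqP //|neq].
  by move/negP: noP; case; apply/existsP; exists x; rewrite /P ltn_ord.
have [i /andP [lin neq] mini] := ex_minnP (ex_intro P x Px).
have pre m : m < i -> memcyc Y m = memcyc Y' m.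
  move=> mi; case: (boolP (memcyc Y m == memcyc Y' m)) => [/eqP //|neq'].
  by have := mini m; rewrite /P neq' andbT; lia.
case Yi: (memcyc Y i) neq; case Y'i: (memcyc Y' i) => // _.
  by have := first_difference_card YY' lin pre Yi (negbT Y'i); lia.
have pre' m : m < i -> memcyc Y' m = memcyc Y m by move/pre.
by have := first_difference_card (esym YY') lin pre' Y'i (negbT Yi); lia.
Qed.

Section Visible.
Variable f : nat -> bool.
Local Notation h := (height f).

(* p < i is visible at time i if the walk stays strictly above h p on (p, i],
   i.e. p is the last visit of level h p before time i. *)
Definition visible i p := (p < i) && all (fun m => h p < h m)%R (iota p.+1 (i - p)).

Lemma visibleP i p :
  reflect (p < i /\ forall m, p < m <= i -> (h p < h m)%R) (visible i p).
Proof.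
apply: (iffP andP) => [[pi /allP H]|[pi H]]; split => //.
  by move=> m hm; apply: H; rewrite mem_iota; lia.
by apply/allP => m; rewrite mem_iota => hm; apply: H; lia.
Qed.

Lemma visibleS i p : p < i -> visible i.+1 p = visible i p && (h p < h i.+1)%R.
Proof.
move=> pi; apply/visibleP/andP => [[_ H]|[/visibleP [_ H] hi]].
  by split; [apply/visibleP; split => // m hm; apply: H|apply: H]; lia.
split => [|m]; first lia.
move=> /andP [pm]; rewrite leq_eqVlt ltnS => /orP [/eqP -> //|mi].
by apply: H; lia.
Qed.

Lemma visible_last i : visible i.+1 i = (h i < h i.+1)%R.
Proof.
apply/visibleP/idP => [[_ H]|hi]; first by apply: H; lia.
by split => // m hm; have -> : m = i.+1 by lia.
Qed.

(* The visible positions below level c occupy the levels in [min_height, c). *)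
Lemma count_visible_below i c :
  Posz (count (fun p => visible i p && (h p < c)%R) (iota 0 i)) =
  Num.max 0%R (Num.min c (h i) - min_height f i)%R.
Proof.
elim: i c => [|i IH] c; first by rewrite /=; lia.
have hmin := min_height_le f (leqnn i).
rewrite -[i.+1]addn1 iotaD count_cat /= addn0 add0n addn1 visible_last min_heightS.
have Evis : {in iota 0 i, forall p, visible i.+1 p = visible i p && (h p < h i.+1)%R}.
  by move=> p; rewrite mem_iota => /andP [_ pi]; apply: visibleS.
rewrite heightS in Evis *; case: (f i) Evis => Evis.
- rewrite (eq_in_count (a2 := fun p => visible i p && (h p < Num.min c (h i - 1))%R)).
    have -> : (h i < h i - 1)%R = false by lia.
    by rewrite addn0 IH; lia.
  by move=> p /Evis ->; rewrite lt_min andbA andbAC.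
- rewrite (eq_in_count (a2 := fun p => visible i p && (h p < c)%R)).
    have -> : (h i < h i + 1)%R = true by lia.
    by rewrite PoszD IH; case: (boolP (h i < c)%R) => /=; lia.
  move=> p /Evis ->; case V: (visible i p) => //=.
  have hp : (h p < h i)%R by move/visibleP: V => [pi]; apply; lia.
  by have -> : (h p < h i + 1)%R = true by lia.
Qed.

End Visible.

Lemma count_iota_prefix (a : pred nat) u n : u <= n ->
  count (fun p => a p && (p < u)) (iota 0 n) = count a (iota 0 u).
Proof.
move=> un; rewrite -(subnKC un) iotaD count_cat add0n.
rewrite [count _ (iota u _)](eq_in_count (a2 := pred0)) ?count_pred0 ?addn0; last first.
  by move=> p; rewrite mem_iota => /andP [up _]; rewrite ltnNge up andbF.
by apply: eq_in_count => p; rewrite mem_iota => /andP [_ ->]; rewrite andbT.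
Qed.

Section LastVisits.
Variables (f : nat -> bool) (n : nat).
Local Notation h := (height f).
Local Notation hmin := (min_height f n).

Definition last_visit p := visible f n p && (h p < hmin + h n)%R.

Definition last_visits_below m := count last_visit (iota 0 m).
Local Notation G := last_visits_below.

Lemma last_visits_belowS m : G m.+1 = G m + last_visit m.
Proof. by rewrite /G -addn1 iotaD count_cat /= addn0. Qed.

Lemma last_visits_below_mono a b : a <= b -> G a <= G b.
Proof. by move=> ab; rewrite /G -(subnKC ab) iotaD count_cat leq_addr. Qed.

Lemma last_visits_below_const a b :
  a <= b -> (forall p, a <= p < b -> ~~ last_visit p) -> G b = G a.
Proof.
move=> ab none; rewrite /G -(subnKC ab) iotaD count_cat add0n.
rewrite [count _ (iota a _)](eq_in_count (a2 := pred0)) ?count_pred0 ?addn0 //.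
by move=> p; rewrite mem_iota subnKC // => /none /negbTE.
Qed.

Lemma last_visit_above p m : last_visit p -> p < m <= n -> (h p < h m)%R.
Proof. by move=> /andP [/visibleP [_ H] _]; apply: H. Qed.

Lemma last_visit_lt p : last_visit p -> p < n.
Proof. by move=> /andP [/visibleP []]. Qed.

Lemma last_visit_out p : last_visit p -> f p = false.
Proof.
move=> lv; have := last_visit_above lv (m := p.+1); rewrite heightS.
by have := last_visit_lt lv; case: (f p) => // pn /(_ ltac:(lia)); lia.
Qed.

(* Last visits before j have distinct levels in [min_height n, h j). *)
Lemma last_visits_below_le j : j <= n -> (Posz (G j) <= h j - hmin)%R.
Proof.
move=> jn; have := min_height_le f jn; have := count_visible_below f n (h j).
suff : G j <= count (fun p => visible f n p && (h p < h j)%R) (iota 0 n) by lia.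
rewrite /G -(count_iota_prefix _ jn); apply: sub_count => p /andP [lv pj].
by case/andP: (lv) => -> _; apply: (last_visit_above lv); lia.
Qed.

(* ... and before a last visit u they fill all the levels below h u. *)
Lemma last_visits_below_eq u : last_visit u -> Posz (G u) = (h u - hmin)%R.
Proof.
move=> lvu; have un := last_visit_lt lvu.
have := min_height_le f (ltnW un); have := last_visit_above lvu (m := n) ltac:(lia).
have := count_visible_below f n (h u).
suff -> : G u = count (fun p => visible f n p && (h p < h u)%R) (iota 0 n) by lia.
rewrite /G -(count_iota_prefix _ (ltnW un)); apply: eq_count => p /=.
apply/andP/andP => [[lv pu]|[vp hp]].
  by split; [case/andP: lv|apply: (last_visit_above lv); lia].
have pn : p < n by case/visibleP: vp.
split; last first.
  rewrite ltnNge leq_eqVlt; apply/negP => /orP [/eqP up|up]; first by rewrite up in hp; lia.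
  by have := last_visit_above lvu (m := p) ltac:(lia); lia.
by rewrite /last_visit vp /=; case/andP: lvu => _; lia.
Qed.

Lemma last_visits_total : (0 <= h n)%R -> Posz (G n) = h n.
Proof.
move=> hn; have := count_visible_below f n (hmin + h n)%R; have := min_height_le f (leq0n n).
by rewrite /G /last_visit => /=; lia.
Qed.

Section AddLastVisits.
Variable g : nat -> bool.
Hypothesis g_def : forall m, m < n -> g m = f m || last_visit m.

Lemma height_add m : m <= n -> height g m = (h m - 2 * Posz (G m))%R.
Proof.
elim: m => [|m IH] // mn; rewrite !heightS IH ?(ltnW mn) // g_def // last_visits_belowS.
by case lv: (last_visit m); rewrite ?(last_visit_out lv) /=; case: (f m) => /=; lia.
Qed.

Lemma last_visit_unpaired k : k < n -> last_visit k -> ~~ paired g k.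
Proof.
move=> kn lvk; apply/negP => /pairedP [_ [j jk]].
have := last_visits_below_eq lvk; have := last_visits_below_le (j := j) ltac:(lia).
by have := last_visits_below_mono jk; rewrite !height_add //; lia.
Qed.

Lemma paired_add_from k : k < n -> ~~ last_visit k -> paired g k -> paired f k.
Proof.
move=> kn lvNk /pairedP [gk [j jk hj]]; apply/pairedP.
split; first by rewrite g_def // (negbTE lvNk) orbF in gk.
exists j => //; move: hj; have := last_visits_below_mono jk.
by rewrite !height_add; lia.
Qed.

Lemma paired_add_to k : k < n -> ~~ last_visit k -> paired f k -> paired g k.
Proof.
move=> kn lvNk /pairedP [fk [j jk hj]]; apply/pairedP; split; first by rewrite g_def // fk.
pose P q := (q <= k) && (h q < h k)%R.
have exP : exists q, P q by exists j; rewrite /P jk.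
have ubP q : P q -> q <= k by case/andP.
case: (ex_maxnP exP ubP) => jm /andP [jmk hjm] maxj.
have jm_lt : jm < k by case: (ltngtP jm k) jmk hjm => // ->; lia.
have above m : jm < m <= k -> (h k <= h m)%R.
  move=> hm; case: (leP (h k) (h m)) => // lt.
  by have := maxj m; rewrite /P lt andbT; lia.
have G_k : G k = G jm.+1.
  apply: last_visits_below_const => [|p hp]; first lia.
  apply/negP => lvp; have := last_visit_above lvp (m := k) ltac:(lia).
  by have := above p ltac:(lia); lia.
rewrite height_add ?(ltnW kn) // G_k last_visits_belowS.
case lvjm: (last_visit jm) => /=.
- have hjm1 : h jm.+1 = (h jm + 1)%R by rewrite heightS (last_visit_out lvjm).
  have hk1 : h k.+1 = (h k - 1)%R by rewrite heightS fk.
  have := last_visit_above lvjm (m := k.+1) ltac:(lia).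
  by exists jm.+1 => //; rewrite height_add ?last_visits_belowS ?lvjm; lia.
- by exists jm => //; rewrite height_add; lia.
Qed.

Lemma paired_add k : k < n -> paired g k = paired f k.
Proof.
move=> kn; case lvk: (last_visit k).
  by rewrite (negbTE (last_visit_unpaired kn lvk)) /paired (last_visit_out lvk).
by apply/idP/idP; [apply: paired_add_from|apply: paired_add_to]; rewrite ?lvk.
Qed.

End AddLastVisits.

End LastVisits.

Definition last_visit_set n (X : {set 'I_n}) : {set 'I_n} :=
  [set x : 'I_n | last_visit (memcyc X) n x].

Lemma memcycU n (A B : {set 'I_n}) m : memcyc (A :|: B) m = memcyc A m || memcyc B m.
Proof.
apply/existsP/orP => [[x /andP [/setUP [xA|xB] e]]|[/existsP [x /andP [xA e]]|/existsP [x /andP [xB e]]]].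
- by left; apply/existsP; exists x; rewrite xA.
- by right; apply/existsP; exists x; rewrite xB.
- by exists x; rewrite inE xA.
- by exists x; rewrite inE xB orbT.
Qed.

Lemma memcyc_last_visit_set n (X : {set 'I_n}) m : m < n ->
  memcyc (last_visit_set X) m = last_visit (memcyc X) n m.
Proof. by move=> mn; rewrite -[m]/(val (Ordinal mn)) memcycE inE. Qed.

(* X^* = X ∪ U(X): it lies in the chain of X and has size n - |X|. *)
Lemma star_union n (X : {set 'I_n}) : #|X| <= n./2 -> gk_star X = X :|: last_visit_set X.
Proof.
move=> small; set Y := X :|: last_visit_set X.
have Y_def m : m < n -> memcyc Y m = memcyc X m || last_visit (memcyc X) n m.
  by move=> mn; rewrite memcycU memcyc_last_visit_set.
have hn : (0 <= height (memcyc X) n)%R by rewrite height_card; lia.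
have R_eq : gkR Y = gkR X.
  by apply/setP => k; rewrite !gkR_paired (paired_add Y_def).
have card_Y : #|Y| = n - #|X|.
  have := height_card Y; rewrite (height_add Y_def) // last_visits_total //.
  by rewrite height_card; lia.
rewrite /gk_star; case: pickP => [Z /andP [ZC /eqP card_Z]|none] /=.
  by apply: chain_card_inj; [move: ZC; rewrite inE => /eqP ->|rewrite card_Z card_Y].
by have := none Y; rewrite /gk_chain inE R_eq card_Y !eqxx.
Qed.

Lemma height_shift (f g : nat -> bool) s : (forall m, g m = f (m + s)) ->
  forall m, height g m = (height f (m + s) - height f s)%R.
Proof.
move=> gf; elim=> [|m IH]; first by rewrite add0n subrr.
by rewrite heightS gf IH addSn heightS; lia.
Qed.

Definition cyc_record (f : nat -> bool) n p :=
  forall m, p < m <= p + n -> (height f p < height f m)%R.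

Lemma cyc_record_shift (f g : nat -> bool) n s p : (forall m, g m = f (m + s)) ->
  cyc_record g n p <-> cyc_record f n (p + s).
Proof.
move=> gf; have hg := height_shift gf; split => rec m hm.
  by have := rec (m - s) ltac:(lia); rewrite !hg subnK //; lia.
by have := rec (m + s) ltac:(lia); rewrite !hg; lia.
Qed.

Lemma cyc_record_mod (f : nat -> bool) n p : (forall m, f (m + n) = f m) ->
  cyc_record f n p <-> cyc_record f n (p %% n).
Proof.
move=> per; rewrite {1}(divn_eq p n) addnC.
elim: (p %/ n) => [|q IH]; first by rewrite mul0n addn0.
apply: iff_trans IH; rewrite mulSn addnCA addnC.
by symmetry; apply: cyc_record_shift => m; rewrite per.
Qed.

Section CyclicLastVisit.
Variables (f : nat -> bool) (n : nat).
Hypothesis f_periodic : forall m, f (m + n) = f m.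
Hypothesis end_nonneg : (0 <= height f n)%R.
Local Notation h := (height f).

Lemma height_periodic m : h (m + n) = (h m + h n)%R.
Proof. by have := height_shift (g := f) (s := n) (fun m => esym (f_periodic m)) m; lia. Qed.

(* The rotation-invariant description of last visits. *)
Lemma last_visit_cyc_record p : p < n -> last_visit f n p <-> cyc_record f n p.
Proof.
move=> pn; split => [/andP [/visibleP [_ vis] lv]|rec].
  move=> m hm; case: (leqP m n) => mn; first by apply: vis; lia.
  have := height_periodic (m - n); rewrite subnK ?(ltnW mn) //.
  by have := min_height_le f (b := n) (m := m - n) ltac:(lia); lia.
apply/andP; split; first by apply/visibleP; split => // m hm; apply: rec; lia.
have [m0 m0n ->] := min_height_attained f n.
case: (ltngtP p m0) => [pm0|m0p|<-].
- by have := rec m0 ltac:(lia); lia.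
- case: m0 m0p {m0n} => [|m0] m0p; first by have := rec n ltac:(lia); rewrite /=; lia.
  by have := rec (m0.+1 + n) ltac:(lia); rewrite height_periodic; lia.
- by have := rec (p + n) ltac:(lia); rewrite height_periodic; lia.
Qed.

End CyclicLastVisit.

Lemma sigmaE n (x : 'I_n) : val (sigma n x) = x.+1 %% n.
Proof. by rewrite /sigma permE. Qed.

Lemma memcyc_periodic n (A : {set 'I_n}) m : memcyc A (m + n) = memcyc A m.
Proof. by rewrite /memcyc modnDr. Qed.

Lemma memcyc_rotate n (A : {set 'I_n}) m : memcyc (sigma n @: A) m.+1 = memcyc A m.
Proof.
apply/existsP/existsP => [[_ /andP [/imsetP [x xA ->] /eqP]]|[x /andP [xA /eqP e]]].
  rewrite sigmaE -addn1 -[m.+1]addn1 => /eqP; rewrite eqn_modDr modn_small // => /eqP e.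
  by exists x; rewrite xA; apply/eqP.
exists (sigma n x); rewrite mem_imset ?sigmaE /=; last exact: perm_inj.
by rewrite xA e -[(m %% n).+1]addn1 -[m.+1]addn1 modnDml eqxx.
Qed.

Lemma memcyc_rotate_shift n (A : {set 'I_n}) m : 0 < n ->
  memcyc (sigma n @: A) m = memcyc A (m + n.-1).
Proof.
by move=> n_gt0; rewrite -memcyc_periodic (_ : m + n = (m + n.-1).+1) ?memcyc_rotate //; lia.
Qed.

Lemma last_visit_set_rotate n (X : {set 'I_n}) : #|X| <= n./2 ->
  last_visit_set (sigma n @: X) = sigma n @: last_visit_set X.
Proof.
case: n X => [|n] X small; first by apply/setP => -[].
set s := sigma n.+1.
have card_sX : #|s @: X| = #|X| by apply/card_imset/perm_inj.
have nonneg (A : {set 'I_n.+1}) : #|A| = #|X| -> (0 <= height (memcyc A) n.+1)%R.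
  by move=> cA; rewrite height_card cA; lia.
have lvX := last_visit_cyc_record (memcyc_periodic X) (nonneg X erefl).
have lvsX := last_visit_cyc_record (memcyc_periodic (s @: X)) (nonneg _ card_sX).
apply/setP => z; rewrite -(permKV s z) mem_imset ?inE; last exact: perm_inj.
set x := (s^-1)%g z.
suff key : cyc_record (memcyc (s @: X)) n.+1 (s x) <-> cyc_record (memcyc X) n.+1 x.
  apply/idP/idP => [/(lvsX _ (ltn_ord _))/key/lvX|/(lvX _ (ltn_ord _))/key/lvsX]; apply; exact: ltn_ord.
rewrite (cyc_record_shift _ _ (fun m => memcyc_rotate_shift X m (ltn0Sn n))).
rewrite cyc_record_mod; last exact: memcyc_periodic.
by rewrite sigmaE /= modnDml addSn -addnS modnDr modn_small.
Qed.

Lemma star_rotate n (X : {set 'I_n}) : #|X| <= n./2 ->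
  gk_star (sigma n @: X) = sigma n @: gk_star X.
Proof.
move=> small; have small' : #|sigma n @: X| <= n./2 by rewrite card_imset //; exact: perm_inj.
by rewrite !star_union // imsetU last_visit_set_rotate.
Qed.

Lemma imset_perm1 (T : finType) (A : {set T}) : (1%g : {perm T}) @: A = A.
Proof. by rewrite -[RHS]imset_id; apply: eq_imset => x; rewrite perm1. Qed.

Lemma imset_permM (T : finType) (s t : {perm T}) (A : {set T}) :
  (s * t)%g @: A = t @: (s @: A).
Proof. by rewrite -imset_comp; apply: eq_imset => x; rewrite permM. Qed.

Lemma star_equivariant_expg n (rho : {perm 'I_n}) :
  (forall X : {set 'I_n}, #|X| <= n./2 -> gk_star (rho @: X) = rho @: gk_star X) ->
  forall (j : nat) (X : {set 'I_n}), #|X| <= n./2 ->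
  gk_star ((rho ^+ j)%g @: X) = (rho ^+ j)%g @: gk_star X.
Proof.
move=> equiv; elim=> [|j IH] X small; first by rewrite expg0 !imset_perm1.
have small' : #|(rho ^+ j)%g @: X| <= n./2 by rewrite card_imset //; exact: perm_inj.
by rewrite expgSr !imset_permM equiv // IH.
Qed.

Theorem lemma3p1 (n : nat) (X : {set 'I_n}) :
  #|X| <= n./2 ->
  [/\ gk_star (sigma n @: X) = sigma n @: gk_star X,
      (forall j : nat, gk_star ((sigma n ^+ j)%g @: X) = (sigma n ^+ j)%g @: gk_star X),
      (forall j : nat, gk_star ((sigma n ^- j)%g @: X) = (sigma n ^- j)%g @: gk_star X)
    & (forall rho : {perm 'I_n}, rho \in <[sigma n]>%g ->
         gk_star (rho @: X) = rho @: gk_star X)].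
Proof.
move=> small.
have pow j := star_equivariant_expg (@star_rotate n) j small.
have cyc rho : rho \in <[sigma n]>%g -> gk_star (rho @: X) = rho @: gk_star X.
  by case/cycleP => j ->; apply: pow.
split => // [|j]; first exact: star_rotate.
by apply: cyc; rewrite groupV mem_cycle.
Qed.
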